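(* Let $\alpha\in\mathbb{R}$ and $\{\mu_n\}_{n\in\mathbb{N}}\cup\{\mu\}\subset\mathcal{M}(\mathbb{R})$. (a) If $F^{(\alpha)}_{\mu_n}(x)\to F^{(\alpha)}_\mu(x)$ at all continuity points $x$ of $\mu$ and $\{\mu_n\}$ is bounded on compact sets, then $\mu_n\to\mu$ vaguely. (b) If $\mu_n\to\mu$ vaguely, $\alpha$ is a continuity point of $\mu$, and $\{\mu_n\}$ has no mass at every continuity point of $\mu$, then $F^{(\alpha)}_{\mu_n}(x)\to F^{(\alpha)}_\mu(x)$ at all continuity points $x$ of $\mu$. Moreover, both parts remain true for $\alpha=-\infty$ (resp. $\alpha=+\infty$), where in (a) one requires in addition that $\sup_n|\mu_n|((-\infty,c])<\infty$ for every $c\in\mathbb{R}$ (resp. $\sup_n|\mu_n|((c,\infty))<\infty$ for every $c\in\mathbb{R}$), and in (b) the requirement that $\alpha$ be a continuity point is replaced by the requirement that $\{\mu_n\}$ has no mass at $-\infty$ (resp. $+\infty$), i.e. for every $\varepsilon>0$ there is $c\in\mathbb{R}$ with $\limsup_n|\mu_n|((-\infty,c))\le\varepsilon$ (resp. $\limsup_n|\mu_n|((c,\infty))\le\varepsilon$).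
   Context: $\mathcal{M}(\mathbb{R})$ is the set of finite signed Borel measures on $\mathbb{R}$ (all are Radon); $|\mu|$ denotes the variation measure. For $\alpha\in\mathbb{R}$, $F^{(\alpha)}_\mu(x)=\mu((\alpha,x])$ for $x\ge\alpha$ and $F^{(\alpha)}_\mu(x)=-\mu((x,\alpha])$ for $x<\alpha$; further $F^{(-\infty)}_\mu(x)=\mu((-\infty,x])$ and $F^{(+\infty)}_\mu(x)=-\mu((x,\infty))$. A point $x\in\mathbb{R}$ is a continuity point of $\mu$ if $\mu(\{x\})=0$. Vague convergence $\mu_n\to\mu$ means $\int f\,d\mu_n\to\int f\,d\mu$ for all continuous $f$ with compact support. $\{\mu_n\}$ is bounded on compact sets if $\sup_n|\mu_n|(K)<\infty$ for every compact $K\subset\mathbb{R}$. $\{\mu_n\}$ has no mass at a point $x\in\mathbb{R}$ if for every $\varepsilon>0$ there is an open neighbourhood $N$ of $x$ with $\limsup_{n\to\infty}|\mu_n|(N)\le\varepsilon$. *)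

From HB Require Import structures.
From mathcomp Require Import all_boot all_order all_algebra.
From mathcomp Require Import all_classical all_reals all_analysis.
Set Implicit Arguments. Unset Strict Implicit. Unset Printing Implicit Defensive.
Import Order.TTheory GRing.Theory Num.Theory.
Import numFieldNormedType.Exports.
Local Open Scope classical_set_scope.
Local Open Scope ring_scope.

(* A finite signed Borel measure on R is a (real-valued, countably additive)
   charge on the Borel sets of R. *)
Notation signed_measure R := ({charge set (R : realType) -> \bar R}).

Section defs.
Context {R : realType}.

Definition hahnP (nu : signed_measure R) :
  {PN : set R * set R | hahn_decomposition nu PN.1 PN.2}.
Proof.
apply: cid; have [P [N h]] := Hahn_decomposition nu; by exists (P, N).
Defined.

(* the variation measure |nu| (independent of the chosen Hahn decomposition) *)
Definition var_measure (nu : signed_measure R) : set R -> \bar R :=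
  charge_variation (proj2_sig (hahnP nu)).

Definition sintegral (nu : signed_measure R) (f : R -> R) : R :=
  fine (\int[jordan_pos (proj2_sig (hahnP nu))]_x (f x)%:E)
  - fine (\int[jordan_neg (proj2_sig (hahnP nu))]_x (f x)%:E).

Definition Cc (f : R -> R) : Prop :=
  continuous f /\ exists K : set R, compact K /\ forall x, ~ K x -> f x = 0.

Definition vague_cvg (mu_ : nat -> signed_measure R) (mu : signed_measure R) :=
  forall f, Cc f -> sintegral (mu_ n) f @[n --> \oo] --> sintegral mu f.

Definition cont_pt (mu : signed_measure R) (x : R) : Prop := mu [set x] = 0%E.

Definition Fdist (mu : signed_measure R) (alpha : \bar R) (x : R) : R :=
  match alpha with
  | EFin a => if a <= x then fine (mu `]a, x]%classic) else - fine (mu `]x, a]%classic)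
  | -oo%E => fine (mu `]-oo, x]%classic)
  | +oo%E => - fine (mu `]x, +oo[%classic)
  end.

Definition bounded_on_compacts (mu_ : nat -> signed_measure R) : Prop :=
  forall K : set R, compact K -> exists M : R, forall n, (var_measure (mu_ n) K <= M%:E)%E.

Definition no_mass_at (mu_ : nat -> signed_measure R) (x : R) : Prop :=
  forall eps : R, 0 < eps -> exists N : set R,
    [/\ open N, N x & (limn_esup (fun n => var_measure (mu_ n) N) <= eps%:E)%E].

Definition no_mass_at_minfty (mu_ : nat -> signed_measure R) : Prop :=
  forall eps : R, 0 < eps -> exists c : R,
    (limn_esup (fun n => var_measure (mu_ n) `]-oo, c[%classic) <= eps%:E)%E.

Definition no_mass_at_pinfty (mu_ : nat -> signed_measure R) : Prop :=
  forall eps : R, 0 < eps -> exists c : R,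
    (limn_esup (fun n => var_measure (mu_ n) `]c, +oo[%classic) <= eps%:E)%E.

Definition Fdist_cvg (mu_ : nat -> signed_measure R) (mu : signed_measure R)
    (alpha : \bar R) : Prop :=
  forall x, cont_pt mu x -> Fdist (mu_ n) alpha x @[n --> \oo] --> Fdist mu alpha x.

End defs.

From Pilot Require Import Defs.
From HB Require Import structures.
From mathcomp Require Import all_boot all_order all_algebra.
From mathcomp Require Import all_classical all_reals all_analysis.
From mathcomp Require Import measurable_realfun ring lra.
Import Order.TTheory GRing.Theory Num.Theory.
Import numFieldNormedType.Exports.
Local Open Scope classical_set_scope.
Local Open Scope ring_scope.

(** (a) A signed measure has countably many atoms, so continuity points are
    dense and a continuous compactly supported [f] is uniformly close to step
    functions over intervals [(t_i, t_(i+1)]] with continuity-point endpoints.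
    Convergence of [F^(alpha)] gives convergence of the integrals of these
    step functions, and the bound on [|mu_n|] over one fixed compact set
    containing all the intervals controls the error uniformly in [n].
    (b) The indicator of [(a, b]] (or of a half-line) agrees with a continuous
    trapezoid outside small neighbourhoods of its endpoints.  At a continuity
    point, and at [-oo]/[+oo] under the tail hypotheses, these neighbourhoods
    carry little [|mu|]-mass and eventually little [|mu_n|]-mass, so vague
    convergence passes to interval masses; [F^(alpha)] is a difference of
    two of them. *)

Set Implicit Arguments. Unset Strict Implicit. Unset Printing Implicit Defensive.

Section bounded_measurable.
Context d (T : measurableType d) (R : realType).
Implicit Types (f g : T -> R) (A : set T) (m : {finite_measure set T -> \bar R}).

Definition bounded_measurable f :=
  measurable_fun setT f /\ exists M, forall x, `|f x| <= M.

Lemma bounded_measurable_integrable m f : bounded_measurable f ->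
  m.-integrable setT (EFin \o f).
Proof.
move=> [mf [M fM]]; apply: (le_integrable measurableT _ _
  (finite_measure_integrable_cst m M measurableT)); first exact/measurable_EFinP.
by move=> x _ /=; rewrite lee_fin (le_trans (fM x)) // ler_norm.
Qed.

Lemma bounded_measurable_indic A : measurable A -> bounded_measurable \1_A.
Proof.
move=> mA; split; first exact: measurable_indic.
by exists 1 => x; rewrite /indic; case: (_ \in _); rewrite ?normr1 ?normr0.
Qed.

Lemma bounded_measurableD f g : bounded_measurable f -> bounded_measurable g ->
  bounded_measurable (f \+ g).
Proof.
move=> [mf [M fM]] [mg [N gN]]; split; first exact: measurable_funD.
by exists (M + N) => x; rewrite (le_trans (ler_normD _ _)) // lerD.
Qed.

Lemma bounded_measurableB f g : bounded_measurable f -> bounded_measurable g ->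
  bounded_measurable (f \- g).
Proof.
move=> [mf [M fM]] [mg [N gN]]; split; first exact: measurable_funB.
by exists (M + N) => x; rewrite (le_trans (ler_normB _ _)) // lerD.
Qed.

Lemma bounded_measurableZ c f : bounded_measurable f ->
  bounded_measurable (fun x => c * f x).
Proof.
move=> [mf [M fM]]; split; first exact: measurable_funM.
by exists (`|c| * M) => x; rewrite normrM ler_wpM2l.
Qed.

Lemma bounded_measurable_norm f : bounded_measurable f ->
  bounded_measurable (fun x => `|f x|).
Proof.
move=> [mf [M fM]]; split; first exact: measurableT_comp.
by exists M => x; rewrite normr_id.
Qed.

Definition step_fun (c : nat -> R) (S : nat -> set T) k x :=
  \sum_(i < k) c i * \1_(S i) x.

Lemma step_fun0 c S : step_fun c S 0 = cst 0.
Proof. by apply: funext => x; rewrite /step_fun big_ord0. Qed.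

Lemma step_funS c S k :
  step_fun c S k.+1 = step_fun c S k \+ (fun x => c k * \1_(S k) x).
Proof. by apply: funext => x; rewrite /step_fun big_ord_recr. Qed.

Lemma bounded_measurable_step_fun c S k : (forall i, measurable (S i)) ->
  bounded_measurable (step_fun c S k).
Proof.
move=> mS; elim: k => [|k IHk].
  by rewrite step_fun0; split; [exact: measurable_cst|exists 0 => x; rewrite normr0].
rewrite step_funS; apply: bounded_measurableD => //.
exact/bounded_measurableZ/bounded_measurable_indic.
Qed.

Lemma Rintegral_indic_setT m A : measurable A -> Rintegral m setT \1_A = fine (m A).
Proof. by move=> mA; rewrite /Rintegral integral_indic // setIT. Qed.

Lemma Rintegral_step_fun m c S k : (forall i, measurable (S i)) ->
  Rintegral m setT (step_fun c S k) = \sum_(i < k) c i * fine (m (S i)).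
Proof.
move=> mS; elim: k => [|k IHk].
  by rewrite big_ord0 step_fun0 Rintegral_cst // mul0r.
rewrite big_ord_recr /= step_funS RintegralD //.
- rewrite IHk RintegralZl ?Rintegral_indic_setT //.
  exact/bounded_measurable_integrable/bounded_measurable_indic.
- exact/bounded_measurable_integrable/bounded_measurable_step_fun.
- exact/bounded_measurable_integrable/bounded_measurableZ/bounded_measurable_indic.
Qed.

Lemma normr_Rintegral_le_indic m h e A : bounded_measurable h -> measurable A ->
  (forall x, `|h x| <= e * \1_A x) -> `|Rintegral m setT h| <= e * fine (m A).
Proof.
move=> bh mA hA; have iA := bounded_measurable_indic mA.
rewrite (le_trans (le_normr_Rintegral measurableT _)) //.
  exact: bounded_measurable_integrable.
rewrite -Rintegral_indic_setT // -RintegralZl //; last exact: bounded_measurable_integrable.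
apply: le_Rintegral => //.
- exact/bounded_measurable_integrable/bounded_measurable_norm.
- exact/bounded_measurable_integrable/bounded_measurableZ.
Qed.

End bounded_measurable.

Section signed_integral.
Context {R : realType}.
Implicit Types (nu : signed_measure R) (A B : set R) (f g h : R -> R).

Definition jpos nu := jordan_pos (proj2_sig (hahnP nu)).
Definition jneg nu := jordan_neg (proj2_sig (hahnP nu)).

Lemma var_measure_fin_num nu A : measurable A -> var_measure nu A \is a fin_num.
Proof. exact: fin_num_measure. Qed.

Lemma fine_var_measure_ge0 nu A : 0 <= fine (var_measure nu A).
Proof. exact/fine_ge0/measure_ge0. Qed.

Lemma le_fine_var_measure nu A B : measurable A -> measurable B -> A `<=` B ->
  fine (var_measure nu A) <= fine (var_measure nu B).
Proof.
move=> mA mB AB; rewrite fine_le ?var_measure_fin_num //.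
by rewrite le_measure // inE.
Qed.

Lemma fine_var_measureU nu A B : measurable A -> measurable B ->
  fine (var_measure nu (A `|` B)) <=
  fine (var_measure nu A) + fine (var_measure nu B).
Proof.
move=> mA mB; rewrite -fineD ?var_measure_fin_num // fine_le //.
- exact/var_measure_fin_num/measurableU.
- by rewrite fin_numD !var_measure_fin_num.
- exact: measureU2.
Qed.

Lemma fine_chargeE nu A : measurable A ->
  fine (nu A) = fine (jpos nu A) - fine (jneg nu A).
Proof.
move=> mA; rewrite (jordan_decomp (proj2_sig (hahnP nu)) mA) /cadd /= cscaleN1.
by rewrite fineB // fin_num_measure.
Qed.

Lemma charge_sintegralE nu f :
  Defs.sintegral nu f = Rintegral (jpos nu) setT f - Rintegral (jneg nu) setT f.
Proof. by []. Qed.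

Lemma charge_sintegralB nu f g : bounded_measurable f -> bounded_measurable g ->
  Defs.sintegral nu (f \- g) = Defs.sintegral nu f - Defs.sintegral nu g.
Proof.
move=> bf bg; rewrite !charge_sintegralE !RintegralB //;
  try exact: bounded_measurable_integrable.
ring.
Qed.

Lemma charge_sintegral_indic nu A : measurable A -> Defs.sintegral nu \1_A = fine (nu A).
Proof. by move=> mA; rewrite charge_sintegralE !Rintegral_indic_setT // fine_chargeE. Qed.

Lemma charge_sintegral_step_fun nu c S k : (forall i, measurable (S i)) ->
  Defs.sintegral nu (step_fun c S k) = \sum_(i < k) c i * fine (nu (S i)).
Proof.
move=> mS; rewrite charge_sintegralE !Rintegral_step_fun // -sumrB.
by apply: eq_bigr => i _; rewrite fine_chargeE // mulrBr.
Qed.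

Lemma normr_charge_sintegral_le_indic nu h e A : bounded_measurable h -> measurable A ->
  (forall x, `|h x| <= e * \1_A x) ->
  `|Defs.sintegral nu h| <= e * fine (var_measure nu A).
Proof.
move=> bh mA hA; rewrite charge_sintegralE fineD ?fin_num_measure // mulrDr.
by rewrite (le_trans (ler_normB _ _)) // lerD // normr_Rintegral_le_indic.
Qed.

End signed_integral.

Lemma cvg_of_approx {R : realFieldType} {V : normedModType R} {T : Type}
    (F : set_system T) {FF : Filter F} (u : T -> V) (l : V) :
  (forall e, 0 < e -> exists (v : T -> V) (k : V),
    [/\ v @ F --> k, \forall t \near F, `|u t - v t| <= e & `|l - k| <= e]) ->
  u @ F --> l.
Proof.
move=> approx; apply/cvgrPdist_le => e e0.
have e3 : 0 < e / 3 by rewrite divr_gt0.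
have [v [k [/cvgrPdist_le /(_ _ e3) vk uv lk]]] := approx _ e3.
near=> t; have -> : l - u t = (l - k) + (k - v t) - (u t - v t).
  by rewrite subrKA opprB subrKA.
rewrite (le_trans (ler_normB _ _)) // (le_trans (lerD (ler_normD _ _) (lexx _))) //.
have -> : e = e / 3 + e / 3 + e / 3 by field.
by rewrite !lerD //; near: t.
Unshelve. all: end_near. Qed.

Section distribution_function.
Context {R : realType}.
Implicit Types (nu : signed_measure R).

Lemma fine_charge_itv_split nu (a x y : itv_bound R) : (a <= x)%O -> (x <= y)%O ->
  fine (nu [set` Interval a y]) =
  fine (nu [set` Interval a x]) + fine (nu [set` Interval x y]).
Proof.
move=> ax xy; rewrite (itv_bndbnd_setU ax xy) chargeU // ?fineD ?fin_num_measure //.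
apply/seteqP; split => z //= []; rewrite !in_itv => /andP[_ zx] /andP[xz _].
by case: x zx xz {ax xy} => [[] u|[]] //= *; lra.
Qed.

Lemma Fdist_subE nu (alpha : \bar R) a b : a <= b ->
  Fdist nu alpha b - Fdist nu alpha a = fine (nu `]a, b]%classic).
Proof.
move=> ab; case: alpha => [c| |] /=.
- have [ca|ac] := leP c a.
    rewrite (le_trans ca ab).
    by rewrite (@fine_charge_itv_split nu (BRight c) (BRight a) (BRight b)) ?bnd_simp //; ring.
  have [cb|bc] := leP c b.
    by rewrite (@fine_charge_itv_split nu (BRight a) (BRight c) (BRight b))
      ?bnd_simp ?(ltW ac) //; ring.
  by rewrite (@fine_charge_itv_split nu (BRight a) (BRight b) (BRight c))
    ?bnd_simp ?(ltW bc) //; ring.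
- by rewrite (@fine_charge_itv_split nu (BRight a) (BRight b) +oo%O) ?bnd_simp //; ring.
- by rewrite (@fine_charge_itv_split nu -oo%O (BRight a) (BRight b)) ?bnd_simp //; ring.
Qed.

End distribution_function.

Section atoms.
Context {R : realType}.
Implicit Types (nu : signed_measure R).

Lemma measure_atoms_countable (m : {measure set R -> \bar R}) :
  m setT \is a fin_num -> countable [set r | 0 < fine (m [set r])].
Proof.
move=> mT; set M := fine (m setT).
have mfin A : measurable A -> m A \is a fin_num.
  move=> mA; rewrite ge0_fin_numE // (le_lt_trans (le_measure _ _ _ (subsetT A))) ?inE //.
  by rewrite ltey_eq mT.
rewrite [X in countable X](_ : _ =
    \bigcup_n [set r | M * n.+1%:R^-1 < fine (m [set r])]); last first.
  apply/seteqP; split => [r /= r0|r /= [k _]]; last first.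
    by apply: le_lt_trans; rewrite mulr_ge0 // fine_ge0.
  have M0 : 0 < M.
    by rewrite (lt_le_trans r0) // fine_le ?mfin // le_measure // inE.
  have [k] := ltr_add_invr (divr_gt0 r0 M0); rewrite add0r => hk.
  by exists k => //=; rewrite mulrC -ltr_pdivlMr.
apply: bigcup_countable => // n _; apply: finite_set_countable.
(* [n.+1] distinct atoms of mass [> M / n.+1] would weigh more than [m setT]. *)
apply: contrapT => /infiniteP/pcard_leP/injfunPex[/= q q_fun q_inj].
have : (m (\bigcup_k [set q k]) <= m setT)%E.
  by rewrite le_measure ?inE //; apply: bigcup_measurable => k _.
rewrite leNgt => /negP; apply.
rewrite [ltRHS](_ : _ = \sum_(0 <= k <oo) m [set q k])%E; last first.
  rewrite measure_bigcup //; first by apply: eq_eseriesl => // i; rewrite in_setT.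
  apply/trivIsetP => i j _ _ ij; apply/seteqP; split => // z /= [-> ].
  by move/q_inj => /(_ (in_setT _) (in_setT _)) /eqP; rewrite (negbTE ij).
apply: (lt_le_trans _ (nneseries_lim_ge n.+1 _)) => //.
rewrite -(fineK mT) -EFin_sum_fine; last by move=> k _; exact: mfin.
rewrite -/M lte_fin.
rewrite (_ : M = \sum_(0 <= k < n.+1) M * n.+1%:R^-1); last first.
  by rewrite sumr_const_nat subn0 -[RHS]mulr_natr -mulrA mulVf ?mulr1.
by apply: ltr_sum => // k _; exact: q_fun.
Qed.

Lemma exists_cont_pt nu a b : a < b -> exists2 x, a < x < b & cont_pt nu x.
Proof.
move=> ab; apply: contrapT => nocont.
set A := [set r | 0 < fine (var_measure nu [set r])].
have cA : countable A := measure_atoms_countable (var_measure_fin_num nu measurableT).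
have abA : `]a, b[%classic `<=` A.
  move=> x /= xab; rewrite /A /= lt_neqAle fine_var_measure_ge0 andbT.
  apply/eqP => /esym var0; apply: nocont; exists x; first by rewrite in_itv in xab.
  apply/eqP; rewrite -abse_eq0 eq_le abse_ge0 andbT.
  have := abse_charge_variation (proj2_sig (hahnP nu)) (measurable_set1 x).
  by rewrite -/(var_measure nu _) -(fineK (var_measure_fin_num nu (measurable_set1 x))) var0.
have : (lebesgue_measure (`]a, b[%classic : set R) <= lebesgue_measure A)%E.
  by apply: le_measure; rewrite ?inE //; exact: countable_measurable.
rewrite (countable_lebesgue_measure0 cA) lebesgue_measure_itv /= lte_fin ab.
by rewrite -EFinB lee_fin subr_le0 leNgt ab.
Qed.

End atoms.

Section variation_tails.
Context {R : realType}.
Implicit Types (nu : signed_measure R).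

Lemma var_measure_set1 nu x : cont_pt nu x -> var_measure nu [set x] = 0%E.
Proof.
move=> nux; rewrite /var_measure /charge_variation /= jordan_posE jordan_negE.
rewrite cjordan_posE cjordan_negE /crestr0 mem_set // /crestr.
suff nuI S : nu ([set x] `&` S) = 0%E by rewrite !nuI oppe0 adde0.
have [Sx|nSx] := pselect (S x).
  by rewrite (_ : _ `&` _ = [set x]) //; apply/seteqP; split => z //= [-> //].
by rewrite (_ : _ `&` _ = set0) ?charge0 //; apply/seteqP; split => z //= [-> //].
Qed.

Lemma cvg_var_measure_nonincreasing nu (F : (set R)^nat) :
  (forall k, measurable (F k)) -> nonincreasing_seq F ->
  var_measure nu (\bigcap_k F k) = 0%E ->
  fine (var_measure nu (F k)) @[k --> \oo] --> 0.
Proof.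
move=> mF nF F0.
have mI : measurable (\bigcap_k F k) by exact: bigcapT_measurable.
have F0fin : (var_measure nu (F 0%N) < +oo)%E by rewrite ltey_eq var_measure_fin_num.
have := nonincreasing_cvg_mu F0fin mF mI nF.
by rewrite [X in _ --> X](_ : _ = 0%:E) // => /fine_cvgP[].
Qed.

Lemma var_measure_ball_small nu x eps : cont_pt nu x -> 0 < eps ->
  exists2 d, 0 < d & fine (var_measure nu (ball x d)) <= eps.
Proof.
move=> nux e0; pose F k : set R := ball x k.+1%:R^-1.
have FI : \bigcap_k F k = [set x].
  apply/seteqP; split => [y Fy|y -> k _]; last exact: ballxx.
  apply: contrapT => /eqP yx.
  have xy0 : 0 < `|x - y| by rewrite normr_gt0 subr_eq0 eq_sym.
  have [k] := ltr_add_invr xy0; rewrite add0r => kxy.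
  by have := Fy k I; rewrite /F -ball_normE /= => /(lt_trans kxy); rewrite ltxx.
have nF : nonincreasing_seq F.
  move=> m n mn; apply/subsetPset/le_ball.
  by rewrite lef_pV2 ?posrE // ler_nat ltnS.
have F0 : var_measure nu (\bigcap_k F k) = 0%E by rewrite FI var_measure_set1.
have /cvgr0_norm_le /(_ _ e0) [k _ /(_ k (leqnn k))] :=
  cvg_var_measure_nonincreasing (fun k => measurable_ball _ _) nF F0.
by rewrite ger0_norm ?fine_var_measure_ge0 //; exists k.+1%:R^-1.
Qed.

Lemma var_measure_itvNy_small nu eps : 0 < eps ->
  exists c, fine (var_measure nu `]-oo, c[%classic) <= eps.
Proof.
move=> e0; pose F k : set R := `]-oo, - k%:R[%classic.
have F0 : var_measure nu (\bigcap_k F k) = 0%E.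
  rewrite (_ : \bigcap_k F k = set0) ?measure0 //.
  apply/seteqP; split => // y Fy.
  have := Fy (Num.truncn (- y)).+1 I; rewrite /F /= in_itv /= ltrNr.
  by move/(lt_trans (truncnS_gt (- y))); rewrite ltxx.
have nF : nonincreasing_seq F.
  move=> m n mn; apply/subsetPset => y; rewrite /F /= !in_itv /= => yn.
  by rewrite (lt_le_trans yn) // lerN2 ler_nat.
have /cvgr0_norm_le /(_ _ e0) [k _ /(_ k (leqnn k))] :=
  cvg_var_measure_nonincreasing (fun k => measurable_itv _) nF F0.
by rewrite ger0_norm ?fine_var_measure_ge0 //; exists (- k%:R).
Qed.

Lemma var_measure_itvy_small nu eps : 0 < eps ->
  exists c, fine (var_measure nu `]c, +oo[%classic) <= eps.
Proof.
move=> e0; pose F k : set R := `]k%:R, +oo[%classic.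
have F0 : var_measure nu (\bigcap_k F k) = 0%E.
  rewrite (_ : \bigcap_k F k = set0) ?measure0 //.
  apply/seteqP; split => // y Fy.
  have := Fy (Num.truncn y).+1 I; rewrite /F /= in_itv /= andbT.
  by move/(lt_trans (truncnS_gt y)); rewrite ltxx.
have nF : nonincreasing_seq F.
  move=> m n mn; apply/subsetPset => y; rewrite /F /= !in_itv /= !andbT => ny.
  by rewrite (le_lt_trans _ ny) // ler_nat.
have /cvgr0_norm_le /(_ _ e0) [k _ /(_ k (leqnn k))] :=
  cvg_var_measure_nonincreasing (fun k => measurable_itv _) nF F0.
by rewrite ger0_norm ?fine_var_measure_ge0 //; exists k%:R.
Qed.

End variation_tails.

Lemma normr_indicB_le {T : Type} {R : realFieldType} (B E : set T) (f : T -> R) :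
  (forall x, 0 <= f x <= 1) -> (forall x, ~ E x -> f x = \1_B x) ->
  forall x, `|\1_B x - f x| <= \1_E x.
Proof.
move=> f01 fE x; have [Ex|nEx] := pselect (E x); last by rewrite fE // subrr normr0.
have /andP[f0 f1] := f01 x; rewrite [leRHS]indicE mem_set // indicE.
by case: (_ \in _); rewrite /= ?mulr1n ?mulr0n ler_norml; apply/andP; split; lra.
Qed.

Section compact_support.
Context {R : realType}.
Implicit Types (a b d u x : R).

Lemma indic_itv (i : interval R) x : \1_[set` i] x = (x \in i)%:R :> R.
Proof. by rewrite indicE mem_setE. Qed.

Lemma Cc_bounded_measurable (f : R -> R) : Cc f -> bounded_measurable f.
Proof.
move=> [cf [K [cK fK]]]; split; first exact: continuous_measurable_fun.
have [M [_ hM]] := compact_bounded (continuous_compact (continuous_subspaceT cf) cK).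
exists (`|M| + 1) => x; have [Kx|nKx] := pselect (K x).
  by apply: hM; [rewrite ltr_pwDr // ler_norm|exists x].
by rewrite fK // normr0 addr_ge0.
Qed.

Definition clamp01 u := Num.max 0 (Num.min 1 u).

Lemma clamp01_ge0 u : 0 <= clamp01 u.
Proof. by rewrite le_max lexx. Qed.

Lemma clamp01_le1 u : clamp01 u <= 1.
Proof. by rewrite ge_max ler01 ge_min lexx. Qed.

Lemma clamp01_le0 u : u <= 0 -> clamp01 u = 0.
Proof. by move=> u0; apply/le_anti; rewrite clamp01_ge0 ge_max lexx ge_min u0 orbT. Qed.

Lemma clamp01_ge1 u : 1 <= u -> clamp01 u = 1.
Proof. by move=> u1; apply/le_anti; rewrite clamp01_le1 le_max le_min lexx u1 orbT. Qed.

Lemma continuous_clamp01 : continuous clamp01.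
Proof.
rewrite (_ : clamp01 = cst 0 \max (cst 1 \min idfun)) // => u.
apply: continuous_max; first exact: cvg_cst.
by apply: continuous_min; [exact: cvg_cst|exact: cvg_id].
Qed.

Definition trapezoid a b d x := Num.min (clamp01 ((x - a) / d)) (clamp01 ((b - x) / d)).

Lemma trapezoid01 a b d x : 0 <= trapezoid a b d x <= 1.
Proof. by rewrite le_min !clamp01_ge0 ge_min clamp01_le1. Qed.

Lemma trapezoid_out a b d x : 0 < d -> x <= a \/ b <= x -> trapezoid a b d x = 0.
Proof.
move=> d0 xab; have le0 y : y <= 0 -> y / d <= 0 by rewrite pmulr_lle0 ?invr_gt0.
rewrite /trapezoid; case: xab => [xa|bx].
  by rewrite [X in Num.min X _]clamp01_le0 ?min_l ?clamp01_ge0 // le0 // subr_le0.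
by rewrite [X in Num.min _ X]clamp01_le0 ?min_r ?clamp01_ge0 // le0 // subr_le0.
Qed.

Lemma trapezoid_in a b d x : 0 < d -> a + d <= x -> x <= b - d -> trapezoid a b d x = 1.
Proof.
move=> d0 ax xb; have ge1 y : d <= y -> 1 <= y / d by rewrite ler_pdivlMr // mul1r.
by rewrite /trapezoid !clamp01_ge1 ?minxx //; apply: ge1; lra.
Qed.

Lemma continuous_trapezoid a b d : continuous (trapezoid a b d).
Proof.
rewrite (_ : trapezoid a b d =
  (clamp01 \o (fun y => (y - a) / d)) \min (clamp01 \o (fun y => (b - y) / d))) // => x.
apply: continuous_min; apply: continuous_comp; try exact: continuous_clamp01.
- by apply: cvgM; [apply: cvgB; [exact: cvg_id|exact: cvg_cst]|exact: cvg_cst].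
- by apply: cvgM; [apply: cvgB; [exact: cvg_cst|exact: cvg_id]|exact: cvg_cst].
Qed.

Lemma Cc_trapezoid a b d : 0 < d -> Cc (trapezoid a b d).
Proof.
move=> d0; split; first exact: continuous_trapezoid.
exists `[a, b]%classic; split; first exact: segment_compact.
move=> x; rewrite /= in_itv /= => /negP; rewrite negb_and -!ltNge => xab.
by apply: trapezoid_out => //; case/orP: xab => /ltW; [left|right].
Qed.

End compact_support.

Lemma limn_esup_lt_near {R : realType} (u : (\bar R)^nat) (l : \bar R) :
  (limn_esup u < l)%E -> \forall n \near \oo, (u n < l)%E.
Proof.
rewrite /limn_esup /limf_esup => /ereal_inf_lt[_ [V FV <-]] Vl.
apply: filterS FV => n Vn; apply: le_lt_trans Vl.
by apply: ereal_sup_ubound; exists n.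
Qed.

Lemma not_ball_le {R : realType} (a d x : R) : ~ ball a d x -> x <= a - d \/ a + d <= x.
Proof.
rewrite ball_itv /= in_itv /= => /negP; rewrite negb_and -!leNgt.
by case/orP; [left|right].
Qed.

Section vague_to_charge.
Context {R : realType}.
Variables (mu_ : nat -> signed_measure R) (mu : signed_measure R).

Definition uniformly_small (eps : R) (E : set R) :=
  [/\ measurable E, \forall n \near \oo, fine (var_measure (mu_ n) E) <= eps
    & fine (var_measure mu E) <= eps].

Lemma uniformly_small_sub eps E E' : measurable E' -> E' `<=` E ->
  uniformly_small eps E -> uniformly_small eps E'.
Proof.
move=> mE' E'E [mE smalln small]; split => //.
  by apply: filterS smalln => n; apply: le_trans; exact: le_fine_var_measure.
by apply: le_trans small; exact: le_fine_var_measure.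
Qed.

Lemma uniformly_smallU eps1 eps2 A B : uniformly_small eps1 A ->
  uniformly_small eps2 B -> uniformly_small (eps1 + eps2) (A `|` B).
Proof.
move=> [mA smallnA smallA] [mB smallnB smallB]; split; first exact: measurableU.
  near=> n; rewrite (le_trans (fine_var_measureU _ mA mB)) // lerD //; near: n.
  - exact: smallnA.
  - exact: smallnB.
by rewrite (le_trans (fine_var_measureU _ mA mB)) // lerD.
Unshelve. all: end_near. Qed.

Lemma limn_esup_var_measure_near (N : set R) eps : measurable N -> 0 < eps ->
  (limn_esup (fun n => var_measure (mu_ n) N) <= (eps / 2)%:E)%E ->
  \forall n \near \oo, fine (var_measure (mu_ n) N) <= eps.
Proof.
move=> mN e0 esup; have : (limn_esup (fun n => var_measure (mu_ n) N) < eps%:E)%E.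
  by rewrite (le_lt_trans esup) // lte_fin ltr_pdivrMr // ltr_pMr // ltr1n.
move/limn_esup_lt_near; apply: filterS => n /ltW.
by rewrite -lee_fin fineK // var_measure_fin_num.
Qed.

Lemma uniformly_small_ball a eps : cont_pt mu a -> no_mass_at mu_ a -> 0 < eps ->
  exists2 d, 0 < d & uniformly_small eps (ball a d).
Proof.
move=> mua na e0; have e2 : 0 < eps / 2 by rewrite divr_gt0.
have [N [oN Na /(limn_esup_var_measure_near (open_measurable oN) e0) smallN]] := na _ e2.
have /nbhs_ballP[d1 d10 d1N] : nbhs a N by exact: open_nbhs_nbhs.
have [d2 d20 small2] := var_measure_ball_small mua e0.
exists (Num.min d1 d2); first by rewrite lt_min d10 d20.
split; first exact: measurable_ball.
  apply: filterS smallN => n; apply: le_trans; apply: le_fine_var_measure.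
  - exact: measurable_ball.
  - exact: open_measurable.
  - by apply: subset_trans d1N; apply: le_ball; rewrite ge_min lexx.
apply: le_trans small2; apply: le_fine_var_measure; try exact: measurable_ball.
by apply: le_ball; rewrite ge_min lexx orbT.
Qed.

Lemma uniformly_small_itvNy eps : no_mass_at_minfty mu_ -> 0 < eps ->
  exists c, uniformly_small eps `]-oo, c[%classic.
Proof.
move=> nm e0; have e2 : 0 < eps / 2 by rewrite divr_gt0.
have [c1 /(limn_esup_var_measure_near (measurable_itv _) e0) small1] := nm _ e2.
have [c2 small2] := var_measure_itvNy_small mu e0.
have sub c : Num.min c1 c2 <= c -> `]-oo, Num.min c1 c2[%classic `<=` `]-oo, c[%classic.
  by move=> h x; rewrite /= !in_itv /= => /lt_le_trans; apply.
exists (Num.min c1 c2); split; first exact: measurable_itv.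
  apply: filterS small1 => n; apply: le_trans; apply: le_fine_var_measure => //.
  by apply: sub; rewrite ge_min lexx.
by apply: le_trans small2; apply: le_fine_var_measure => //; apply: sub; rewrite ge_min lexx orbT.
Qed.

Lemma uniformly_small_itvy eps : no_mass_at_pinfty mu_ -> 0 < eps ->
  exists c, uniformly_small eps `]c, +oo[%classic.
Proof.
move=> nm e0; have e2 : 0 < eps / 2 by rewrite divr_gt0.
have [c1 /(limn_esup_var_measure_near (measurable_itv _) e0) small1] := nm _ e2.
have [c2 small2] := var_measure_itvy_small mu e0.
have sub c : c <= Num.max c1 c2 -> `]Num.max c1 c2, +oo[%classic `<=` `]c, +oo[%classic.
  by move=> h x; rewrite /= !in_itv /= !andbT; apply: le_lt_trans.
exists (Num.max c1 c2); split; first exact: measurable_itv.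
  apply: filterS small1 => n; apply: le_trans; apply: le_fine_var_measure => //.
  by apply: sub; rewrite le_max lexx.
by apply: le_trans small2; apply: le_fine_var_measure => //; apply: sub; rewrite le_max lexx orbT.
Qed.

Lemma vague_cvg_charge B : vague_cvg mu_ mu -> measurable B ->
  (forall eps, 0 < eps -> exists f E, [/\ Cc f, forall x, 0 <= f x <= 1,
     forall x, ~ E x -> f x = \1_B x & uniformly_small eps E]) ->
  fine (mu_ n B) @[n --> \oo] --> fine (mu B).
Proof.
move=> vmu mB approx; apply: cvg_of_approx => eps e0.
have [f [E [Cf f01 fE [mE smalln small]]]] := approx _ e0.
have bf := Cc_bounded_measurable Cf.
have close (nu : signed_measure R) : `|fine (nu B) - Defs.sintegral nu f| <= fine (var_measure nu E).
  rewrite -charge_sintegral_indic // -charge_sintegralB //; last exact: bounded_measurable_indic.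
  rewrite -[leRHS]mul1r; apply: normr_charge_sintegral_le_indic => //.
    exact/bounded_measurableB/bf/bounded_measurable_indic.
  by move=> x; rewrite mul1r; exact: normr_indicB_le.
exists (fun n => Defs.sintegral (mu_ n) f), (Defs.sintegral mu f); split.
- exact: vmu.
- by apply: filterS smalln => n; apply: le_trans; exact: close.
- exact: le_trans (close mu) small.
Qed.

End vague_to_charge.

Section vague_to_distribution.
Context {R : realType}.
Variables (mu_ : nat -> signed_measure R) (mu : signed_measure R).
Hypothesis vmu : vague_cvg mu_ mu.

Lemma cvg_charge_itv_oc a b : cont_pt mu a -> cont_pt mu b ->
  no_mass_at mu_ a -> no_mass_at mu_ b ->
  fine (mu_ n `]a, b]%classic) @[n --> \oo] --> fine (mu `]a, b]%classic).
Proof.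
move=> mua mub na nb; apply: vague_cvg_charge (measurable_itv _) _ => // eps e0.
have e2 : 0 < eps / 2 by rewrite divr_gt0.
have [da da0 sa] := uniformly_small_ball mua na e2.
have [db db0 sb] := uniformly_small_ball mub nb e2.
pose d := Num.min da db; have d0 : 0 < d by rewrite lt_min da0 db0.
exists (trapezoid a b d), (ball a d `|` ball b d); split.
- exact: Cc_trapezoid.
- exact: trapezoid01.
- move=> x /not_orP[/not_ball_le xa /not_ball_le xb]; rewrite indic_itv in_itv /=.
  have [xa'|ax] := leP x a; first by rewrite trapezoid_out //; left.
  have [xb'|bx] := leP x b; last by rewrite trapezoid_out //; right; exact: ltW.
  by rewrite trapezoid_in //; [case: xa|case: xb] => ?; lra.
- rewrite [eps]splitr; apply: uniformly_smallU.
  + apply: uniformly_small_sub sa; [exact: measurable_ball|].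
    by apply: le_ball; rewrite ge_min lexx.
  + apply: uniformly_small_sub sb; [exact: measurable_ball|].
    by apply: le_ball; rewrite ge_min lexx orbT.
Qed.

Lemma cvg_charge_itvNy_oc b : no_mass_at_minfty mu_ -> cont_pt mu b ->
  no_mass_at mu_ b ->
  fine (mu_ n `]-oo, b]%classic) @[n --> \oo] --> fine (mu `]-oo, b]%classic).
Proof.
move=> nm mub nb; apply: vague_cvg_charge (measurable_itv _) _ => // eps e0.
have e2 : 0 < eps / 2 by rewrite divr_gt0.
have [c sc] := uniformly_small_itvNy mu nm e2.
have [d d0 sb] := uniformly_small_ball mub nb e2.
exists (trapezoid (c - d) b d), (`]-oo, c[%classic `|` ball b d); split.
- exact: Cc_trapezoid.
- exact: trapezoid01.
- move=> x /not_orP[xc /not_ball_le xb]; rewrite indic_itv in_itv /=.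
  have cx : c <= x by rewrite leNgt; apply/negP => xc'; apply: xc; rewrite /= in_itv.
  have [xb'|bx] := leP x b; last by rewrite trapezoid_out //; right; exact: ltW.
  by rewrite trapezoid_in //; [lra|case: xb => ?; lra].
- by rewrite [eps]splitr; apply: uniformly_smallU.
Qed.

Lemma cvg_charge_itv_oy a : no_mass_at_pinfty mu_ -> cont_pt mu a ->
  no_mass_at mu_ a ->
  fine (mu_ n `]a, +oo[%classic) @[n --> \oo] --> fine (mu `]a, +oo[%classic).
Proof.
move=> nm mua na; apply: vague_cvg_charge (measurable_itv _) _ => // eps e0.
have e2 : 0 < eps / 2 by rewrite divr_gt0.
have [c sc] := uniformly_small_itvy mu nm e2.
have [d d0 sa] := uniformly_small_ball mua na e2.
exists (trapezoid a (c + d) d), (ball a d `|` `]c, +oo[%classic); split.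
- exact: Cc_trapezoid.
- exact: trapezoid01.
- move=> x /not_orP[/not_ball_le xa xc]; rewrite indic_itv in_itv /= andbT.
  have xc' : x <= c by rewrite leNgt; apply/negP => cx; apply: xc; rewrite /= in_itv /= cx.
  have [xa'|ax] := leP x a; first by rewrite trapezoid_out //; left.
  by rewrite trapezoid_in //; [case: xa => ?; lra|lra].
- by rewrite [eps]splitr; apply: uniformly_smallU.
Qed.

End vague_to_distribution.

Section step_approximation.
Context {R : realType}.

Lemma continuous_compact_uniform (f : R -> R) (S : set R) : continuous f ->
  compact S -> forall eps, 0 < eps -> exists2 d, 0 < d &
    forall x y, S x -> `|x - y| < d -> `|f x - f y| < eps.
Proof.
move=> cf /compact_near_coveringP cover eps e0.
pose P (k : nat) (x : R) := forall y, `|x - y| < k.+1%:R^-1 -> `|f x - f y| < eps.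
have e2 : 0 < eps / 2 by rewrite divr_gt0.
have near_P x : S x -> \forall x' \near x & k \near \oo, P k x'.
  move=> _; have /cvgrPdist_lt /(_ _ e2) /nbhs_ballP[r /= r0 fr] := cf x.
  have r2 : 0 < r / 2 by rewrite divr_gt0.
  have [N] := ltr_add_invr r2; rewrite add0r => Nr.
  exists (ball x (r / 2), [set k | (N <= k)%N]); first split.
  - exact: nbhsx_ballx.
  - by exists N.
  move=> [x' k] /= [xx' Nk] y x'y; rewrite -ball_normE /= in xx'.
  have kN : k.+1%:R^-1 <= N.+1%:R^-1 :> R by rewrite lef_pV2 ?posrE // ler_nat ltnS.
  have fx' : `|f x - f x'| < eps / 2 by apply: fr; rewrite -ball_normE /=; lra.
  have fy : `|f x - f y| < eps / 2.
    apply: fr; rewrite -ball_normE /= (le_lt_trans (ler_distD x' _ _)) //.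
    set u := k.+1%:R^-1 in x'y kN; set v := N.+1%:R^-1 in kN Nr; lra.
  by rewrite (le_lt_trans (ler_distD (f x) _ _)) // distrC [eps]splitr ltrD.
have [N _ PN] := cover nat \oo P _ near_P.
by exists N.+1%:R^-1 => // x y Sx; apply: (PN N (leqnn N)).
Qed.

Lemma sum_indic_itv_oc (t : nat -> R) k x : (forall i, t i <= t i.+1) ->
  \sum_(i < k) \1_(`]t i, t i.+1]%classic) x = \1_(`]t 0%N, t k]%classic) x :> R.
Proof.
move=> tS; have tmono : nondecreasing_seq t by apply/nondecreasing_seqP.
elim: k => [|k IHk]; first by rewrite big_ord0 indic_itv in_itv /= lt_le_asym.
rewrite big_ord_recr /= IHk !indic_itv !in_itv /=.
have := tmono _ _ (leq0n k); have := tS k.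
by case: (ltP (t 0%N) x); case: (leP x (t k)); case: (leP x (t k.+1)) => //=; lra.
Qed.

Lemma step_fun_itv_approx (f : R -> R) (t : nat -> R) m eps :
  (forall i, t i <= t i.+1) -> (forall x, ~ (t 0%N < x <= t m) -> f x = 0) ->
  (forall i x, (i < m)%N -> t i < x <= t i.+1 -> `|f x - f (t i.+1)| <= eps) ->
  forall x, `|f x - step_fun (fun i => f (t i.+1)) (fun i => `]t i, t i.+1]%classic) m x|
    <= eps * \1_(`]t 0%N, t m]%classic) x.
Proof.
move=> tS f_out fosc x; rewrite -sum_indic_itv_oc // mulr_sumr.
have -> : f x = \sum_(i < m) f x * \1_(`]t i, t i.+1]%classic) x.
  rewrite -mulr_sumr sum_indic_itv_oc // indic_itv in_itv /=.
  by have [|/negP/f_out->] := boolP (t 0%N < x <= t m); rewrite /= ?mulr1n ?mulr1 ?mul0r.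
rewrite /step_fun -sumrB (le_trans (ler_norm_sum _ _ _)) //.
apply: ler_sum => i _; rewrite -mulrBl normrM indic_itv.
have [xi|] := boolP (x \in _); last by rewrite normr0 !mulr0.
by rewrite normr1 !mulr1; apply: fosc => //; rewrite in_itv in xi.
Qed.

Lemma cont_pt_grid (nu : signed_measure R) lo hi delta : lo <= hi -> 0 < delta ->
  exists m (t : nat -> R), [/\ forall i, cont_pt nu (t i),
    forall i, t i < t i.+1 < t i + delta, lo - delta < t 0%N < lo
    & hi < t m < hi + delta].
Proof.
move=> lohi d0; pose h := delta / 2; have h0 : 0 < h by rewrite divr_gt0.
pose c i := lo + i%:R * h.
have cS i : c i.+1 = c i + h by rewrite /c -addn1 natrD mulrDl mul1r addrA.
have cont_near i : exists x, c i - h / 2 < x < c i /\ cont_pt nu x.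
  have ci : c i - h / 2 < c i by lra.
  have [x xi cx] := exists_cont_pt nu ci.
  exists x; split; [exact: xi | exact: cx].
have [t tP] := choice cont_near.
pose y := (hi - lo) / h; have y0 : 0 <= y by apply: divr_ge0; lra.
have /andP[ty yt] := trunc_itv y0.
set N := Num.trunc y; have hd : delta = h * 2 by rewrite /h divfK ?pnatr_eq0.
have yh : y * h = hi - lo by rewrite /y divfK ?gt_eqF.
have Nh : N%:R * h <= hi - lo by rewrite -yh ler_pM2r.
have Nh1 : hi - lo < (N%:R + 1) * h by rewrite -yh ltr_pM2r // natr1.
exists N.+2, t; split => [i|i||]; first exact: (tP i).2.
- have [/andP[ti1 ti2] _] := tP i; have [/andP[tj1 tj2] _] := tP i.+1.
  by rewrite cS in tj1 tj2; apply/andP; split; lra.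
- have [/andP[t01 t02] _] := tP 0%N; rewrite /c mul0r addr0 in t01 t02.
  by apply/andP; split; lra.
- have [/andP[tm1 tm2] _] := tP N.+2.
  have N2 : N.+2%:R = N%:R + 2 :> R by rewrite -addn2 natrD.
  by rewrite /c N2 in tm1 tm2; apply/andP; split; lra.
Qed.

(* [L] comes before [eps] so that one compact set carries the bound on [|mu_n|]
   for every approximation. *)
Lemma Cc_cont_pt_step_approx (nu : signed_measure R) f : Cc f ->
  exists L, forall eps, 0 < eps -> exists m (t : nat -> R),
  [/\ forall i, cont_pt nu (t i), forall i, t i <= t i.+1,
    `]t 0%N, t m]%classic `<=` `[- L, L]%classic &
    forall x, `|f x - step_fun (fun i => f (t i.+1)) (fun i => `]t i, t i.+1]%classic) m x|
      <= eps * \1_(`]t 0%N, t m]%classic) x].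
Proof.
move=> [cf [K [cK fK]]]; have [M [_ KM]] := compact_bounded cK.
pose L := `|M| + 1; have L0 : 0 < L by rewrite /L ltr_pwDr.
have ML : M < L by rewrite (le_lt_trans (ler_norm M)) // ltrDl.
have fL x : L < `|x| -> f x = 0.
  by move=> Lx; apply: fK => Kx; have /= := KM L ML x Kx; rewrite leNgt Lx.
exists (L + 1) => eps e0.
have cL : compact `[- (L + 1), L + 1]%classic by exact: segment_compact.
have [d d0 fd] := continuous_compact_uniform cf cL e0.
have d10 : 0 < Num.min d 1 by rewrite lt_min d0 ltr01.
have [m [t [ct tS t0 tm]]] := cont_pt_grid nu (ltW (gtrN L0)) d10.
have d1 : Num.min d 1 <= 1 by rewrite ge_min lexx orbT.
have dd : Num.min d 1 <= d by rewrite ge_min lexx.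
have tle i : t i <= t i.+1 by have /andP[/ltW] := tS i.
have tmono : nondecreasing_seq t by apply/nondecreasing_seqP.
have [/andP[t01 t02] /andP[tm1 tm2]] := (t0, tm).
exists m, t; split => //.
  by move=> x; rewrite /= !in_itv /= => /andP[? ?]; apply/andP; split; lra.
apply: step_fun_itv_approx => //.
  move=> x /negP; rewrite negb_and -!ltNge -leNgt => /orP[xt0|tmx]; apply: fL.
    by rewrite ltr_normr; apply/orP; right; lra.
  by rewrite ltr_normr; apply/orP; left; lra.
move=> i x im /andP[tix xti]; apply/ltW/fd; last first.
  have /andP[_ ?] := tS i; rewrite distrC ger0_norm ?subr_ge0 //; lra.
have := tmono _ _ (leq0n i); have := tmono _ _ im.
by rewrite /= in_itv /=; move=> ? ?; apply/andP; split; lra.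
Qed.

End step_approximation.

Section distribution_to_vague.
Context {R : realType}.
Variables (mu_ : nat -> signed_measure R) (mu : signed_measure R).

Lemma vague_cvg_of_itv_cvg :
  (forall a b, cont_pt mu a -> cont_pt mu b -> a <= b ->
    fine (mu_ n `]a, b]%classic) @[n --> \oo] --> fine (mu `]a, b]%classic)) ->
  bounded_on_compacts mu_ -> vague_cvg mu_ mu.
Proof.
move=> itv_cvg bmu f Cf; have bf := Cc_bounded_measurable Cf.
have [L approx] := Cc_cont_pt_step_approx mu Cf.
pose S := `[- L, L]%classic : set R; have mS : measurable S by exact: measurable_itv.
have [M bM] : exists M, forall n, (var_measure (mu_ n) S <= M%:E)%E.
  by apply: bmu; exact: segment_compact.
pose C := `|M| + fine (var_measure mu S) + 1.
have C0 : 0 < C by rewrite /C; have := fine_var_measure_ge0 mu S; have := normr_ge0 M; lra.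
apply: cvg_of_approx => e e0; have eC : 0 < e / C by rewrite divr_gt0.
have le_e X : X <= C -> e / C * X <= e.
  by move=> XC; rewrite (le_trans (ler_wpM2l (ltW eC) XC)) // divfK ?gt_eqF.
have [m [t [ct tS JS fs]]] := approx _ eC.
pose s := step_fun (fun i => f (t i.+1)) (fun i => `]t i, t i.+1]%classic) m.
have mI i : measurable (`]t i, t i.+1]%classic : set R) by exact: measurable_itv.
have bs : bounded_measurable s by exact: bounded_measurable_step_fun.
have close (nu : signed_measure R) :
    `|Defs.sintegral nu f - Defs.sintegral nu s| <= e / C * fine (var_measure nu S).
  rewrite -charge_sintegralB //.
  rewrite (le_trans (normr_charge_sintegral_le_indic _ _ (measurable_itv _) fs)) //.
    exact: bounded_measurableB.
  by rewrite ler_wpM2l ?(ltW eC) // le_fine_var_measure // measurable_itv.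
exists (fun n => Defs.sintegral (mu_ n) s), (Defs.sintegral mu s); split.
- rewrite /s charge_sintegral_step_fun //.
  under eq_fun do rewrite charge_sintegral_step_fun //.
  apply: cvg_big => [|i _]; first exact: add_continuous.
  by apply: cvgM; [exact: cvg_cst|apply: itv_cvg => //; exact: tS].
- apply: nearW => n; rewrite (le_trans (close _)) // le_e //.
  have : fine (var_measure (mu_ n) S) <= `|M|.
    rewrite -lee_fin fineK ?var_measure_fin_num // (le_trans (bM n)) // lee_fin.
    exact: ler_norm.
  by rewrite /C; have := fine_var_measure_ge0 mu S; lra.
- by rewrite (le_trans (close _)) // le_e // /C; have := normr_ge0 M; lra.
Qed.

Lemma itv_cvg_of_Fdist_cvg alpha : Fdist_cvg mu_ mu alpha ->
  forall a b, cont_pt mu a -> cont_pt mu b -> a <= b ->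
  fine (mu_ n `]a, b]%classic) @[n --> \oo] --> fine (mu `]a, b]%classic).
Proof.
move=> Fcvg a b mua mub ab; rewrite -(Fdist_subE _ alpha ab).
by under eq_fun do rewrite -(Fdist_subE _ alpha ab); apply: cvgB; exact: Fcvg.
Qed.

End distribution_to_vague.

Unset Implicit Arguments. Set Strict Implicit.

Theorem theorem3p8 (R : realType) (mu_ : nat -> signed_measure R)
    (mu : signed_measure R) :
  (* alpha in R *)
  (forall alpha : R,
    ((Fdist_cvg mu_ mu alpha%:E -> bounded_on_compacts mu_ -> vague_cvg mu_ mu)
    /\ (vague_cvg mu_ mu -> cont_pt mu alpha ->
        (forall x, cont_pt mu x -> no_mass_at mu_ x) ->
        Fdist_cvg mu_ mu alpha%:E))) /\
  (* alpha = -oo *)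
  ((Fdist_cvg mu_ mu -oo%E -> bounded_on_compacts mu_ ->
      (forall c : R, exists M : R, forall n,
         (var_measure (mu_ n) (`]-oo, c]%classic) <= M%:E)%E) ->
      vague_cvg mu_ mu)
   /\ (vague_cvg mu_ mu -> no_mass_at_minfty mu_ ->
        (forall x, cont_pt mu x -> no_mass_at mu_ x) ->
        Fdist_cvg mu_ mu -oo%E)) /\
  (* alpha = +oo *)
  ((Fdist_cvg mu_ mu +oo%E -> bounded_on_compacts mu_ ->
      (forall c : R, exists M : R, forall n,
         (var_measure (mu_ n) (`]c, +oo[%classic) <= M%:E)%E) ->
      vague_cvg mu_ mu)
   /\ (vague_cvg mu_ mu -> no_mass_at_pinfty mu_ ->
        (forall x, cont_pt mu x -> no_mass_at mu_ x) ->
        Fdist_cvg mu_ mu +oo%E)).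
Proof.
have part_a alpha : Fdist_cvg mu_ mu alpha -> bounded_on_compacts mu_ -> vague_cvg mu_ mu.
  by move=> /itv_cvg_of_Fdist_cvg; exact: vague_cvg_of_itv_cvg.
split; [move=> alpha; split; first exact: part_a|split; split].
- move=> vmu mua nm x mux; have [na nx] := (nm _ mua, nm _ mux).
  rewrite /Fdist /=; have [ax|xa] := leP alpha x; last apply: cvgN;
    exact: cvg_charge_itv_oc.
- by move=> Fcvg bmu _; exact: part_a Fcvg bmu.
- move=> vmu nmy nm x mux; have nx := nm _ mux.
  exact: cvg_charge_itvNy_oc.
- by move=> Fcvg bmu _; exact: part_a Fcvg bmu.
- move=> vmu nmy nm x mux; have nx := nm _ mux.
  apply: cvgN; exact: cvg_charge_itv_oy.
Qed.
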